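(* Let $X$ be a finite set, $0<p<1$, and let $\mathcal F\subseteq 2^X$ be a monotone increasing family. Then $$(1-p)\,I_p(\mathcal F)\;\ge\;(1-\mu_p(\mathcal F))\,\log_{1-p}\big(1-\mu_p(\mathcal F)\big),$$ with the convention $0\cdot\log_{1-p}0=0$.
   Context: For a finite set $X$ with $|X|=n$ and $p\in[0,1]$, $\mu_p$ is the product measure on $2^X$ given by $\mu_p(S)=p^{|S|}(1-p)^{n-|S|}$, and $\mu_p(\mathcal F)=\sum_{S\in\mathcal F}\mu_p(S)$. A family $\mathcal F\subseteq 2^X$ is monotone increasing if $B\supseteq A\in\mathcal F$ implies $B\in\mathcal F$. The total influence is $I_p(\mathcal F)=\sum_{i\in X}\mu_p(\{S\subseteq X: |\mathcal F\cap\{S,\,S\triangle\{i\}\}|=1\})$. Here $\log_q x=\ln x/\ln q$. *)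

From mathcomp Require Import all_boot all_order all_algebra.
From mathcomp Require Import reals exp.
Set Implicit Arguments. Unset Strict Implicit. Unset Printing Implicit Defensive.
Import Order.TTheory GRing.Theory Num.Theory.
Local Open Scope ring_scope.

Definition mu_set (R : realType) (X : finType) (p : R) (S : {set X}) : R :=
  p ^+ #|S| * (1 - p) ^+ (#|X| - #|S|).

Definition mu (R : realType) (X : finType) (p : R) (F : {set {set X}}) : R :=
  \sum_(S in F) mu_set p S.

Definition monotone_increasing (X : finType) (F : {set {set X}}) : Prop :=
  forall A B : {set X}, A \in F -> A \subset B -> B \in F.

Definition total_influence (R : realType) (X : finType) (p : R)
  (F : {set {set X}}) : R :=
  \sum_(i : X)
    mu p [set S : {set X} | (S \in F) != (((S :\: [set i]) :|: ([set i] :\: S)) \in F)].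

Definition logb (R : realType) (q x : R) : R := ln x / ln q.

Definition xlogb (R : realType) (q x : R) : R :=
  if x == 0 then 0 else x * logb q x.

From mathcomp Require Import all_boot all_order all_algebra.
From mathcomp Require Import reals exp.
From mathcomp Require Import ring lra.
Set Implicit Arguments. Unset Strict Implicit.
Import Order.TTheory GRing.Theory Num.Theory.
Local Open Scope ring_scope.

(* Write q = 1 - p and G for the down-set 2^X \ F.  Every pivotal pair {S, S + i} (S in G, S + i
   not in G) carries mu(S) + mu(S + i) = mu(S) / q, so q I_p(F) is the measure of the lower boundary
   of G counted with directions.  The inequality mu(G) log_q mu(G) <= (that boundary) is proved by
   induction on the ground set: removing a point x splits G into the sections G0 = G and
   G1 = {S | S + x in G} on 2^(X - x), with G1 <= G0, the measure as q mu(G0) + p mu(G1) and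
   the boundary as q B(G0) + p B(G1) + q (mu(G0) - mu(G1)); the step is the two-point inequality
   f(q a + p b) <= q f(a) + p f(b) + q (a - b) for 0 <= b <= a and f(y) = y log_q y. *)

Lemma ln_sub_ge (R : realType) (a b : R) : 0 < a -> 0 < b -> 1 - b / a <= ln a - ln b.
Proof.
move=> a0 b0; have ba0 : 0 < b / a by rewrite divr_gt0.
have := @le_ln1Dx R (b / a - 1); rewrite addrCA subrr addr0 ln_div ?posrE //.
by move=> /(_ ltac:(lra)); lra.
Qed.

Lemma xlnx_two_point (R : realType) (p g0 g1 : R) :
  0 < p -> p < 1 -> 0 <= g1 -> g1 <= g0 ->
  (1 - p) * (g0 - g1) * ln (1 - p) <=
  ((1 - p) * g0 + p * g1) * ln ((1 - p) * g0 + p * g1)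
  - (1 - p) * (g0 * ln g0) - p * (g1 * ln g1).
Proof.
move=> p0 p1 g1_ge0 g10; set q := 1 - p; set g := q * g0 + p * g1.
have q0 : 0 < q by rewrite /q; lra.
have [g0_eq0|g0_neq0] := eqVneq g0 0.
  have g1_eq0 : g1 = 0 by lra.
  by rewrite /g g0_eq0 g1_eq0 !(mulr0, mul0r, subr0, addr0).
have g0_gt0 : 0 < g0 by rewrite lt_def g0_neq0; lra.
have g_gt0 : 0 < g by rewrite /g; nra.
(* Split g = p g1 + q g1 + q (g0 - g1) and bound each piece of g ln g with ln a - ln b >= 1 - b/a;
   the error terms add up to p q g1 (g0 - g1) / g >= 0. *)
have t1 : p * g1 * (1 - g1 / g) <= p * g1 * (ln g - ln g1).
  have [->|g1_neq0] := eqVneq g1 0; first by rewrite !(mulr0, mul0r).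
  by rewrite ler_wpM2l ?ln_sub_ge ?lt_def ?g1_neq0 //; nra.
have t2 : q * g1 * (1 - g0 / g) <= q * g1 * (ln g - ln g0).
  by rewrite ler_wpM2l ?ln_sub_ge //; nra.
have t3 : q * (g0 - g1) * (1 - q * g0 / g) <= q * (g0 - g1) * (ln g - ln (q * g0)).
  by rewrite ler_wpM2l ?ln_sub_ge //; nra.
rewrite lnM ?posrE // in t3.
have error_ge0 : 0 <= p * q * g1 * (g0 - g1) / g.
  by rewrite divr_ge0 ?mulr_ge0 //; lra.
have error_eq : p * q * g1 * (g0 - g1) / g =
  p * g1 * (1 - g1 / g) + q * g1 * (1 - g0 / g) + q * (g0 - g1) * (1 - q * g0 / g).
  by rewrite /g /q; field; rewrite -/q -/g; lra.
have : g * ln g = p * g1 * ln g + q * g1 * ln g + q * (g0 - g1) * ln g by rewrite /g; ring.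
lra.
Qed.

Lemma xlogbE (R : realType) (q x : R) : xlogb q x = x * ln x / ln q.
Proof.
by rewrite /xlogb /logb mulrA; case: eqP => // ->; rewrite !mul0r.
Qed.

Lemma xlogb_two_point (R : realType) (p g0 g1 : R) :
  0 < p -> p < 1 -> 0 <= g1 -> g1 <= g0 ->
  xlogb (1 - p) ((1 - p) * g0 + p * g1) <=
  (1 - p) * xlogb (1 - p) g0 + p * xlogb (1 - p) g1 + (1 - p) * (g0 - g1).
Proof.
move=> p0 p1 g1_ge0 g10; rewrite !xlogbE.
have := xlnx_two_point p0 p1 g1_ge0 g10.
have L_lt0 : ln (1 - p) < 0 by apply: ln_lt0; lra.
set L := ln (1 - p) in L_lt0 *; set g := (1 - p) * g0 + p * g1.
move=> two_point; rewrite -subr_ge0.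
have -> : (1 - p) * (g0 * ln g0 / L) + p * (g1 * ln g1 / L) + (1 - p) * (g0 - g1) - g * ln g / L
   = (g * ln g - (1 - p) * (g0 * ln g0) - p * (g1 * ln g1) - (1 - p) * (g0 - g1) * L) / (- L).
  by field; lra.
by rewrite divr_ge0; lra.
Qed.

Section RestrictedMeasure.
Variables (R : realType) (X : finType) (p : R).

Lemma big_subsetD1 (D : {set X}) x (f : {set X} -> R) : x \in D ->
  \sum_(S : {set X} | S \subset D) f S =
  \sum_(S : {set X} | S \subset D :\ x) f S + \sum_(S : {set X} | S \subset D :\ x) f (x |: S).
Proof.
move=> xD; rewrite (bigID (fun S : {set X} => x \in S)) /= addrC; congr (_ + _).
  by apply: eq_bigl => S; rewrite subsetD1.
rewrite (reindex_onto (fun S => x |: S) (fun S => S :\ x)) /=; last first.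
  by move=> S /andP [_ xS]; rewrite setD1K.
apply: eq_bigl => S; apply/idP/idP.
  by case/andP => /andP [sD _] /eqP <-; apply: setSD.
move=> sS; have xS : x \notin S by move: sS; rewrite subsetD1 => /andP [].
rewrite setU1K // eqxx setU11 !andbT subUset sub1set xD.
by apply: subset_trans sS (subsetDl _ _).
Qed.

Definition mu_on (D S : {set X}) : R := p ^+ #|S| * (1 - p) ^+ (#|D| - #|S|).

Definition mu_in (D : {set X}) (G : pred {set X}) : R :=
  \sum_(S : {set X} | S \subset D) (if G S then mu_on D S else 0).

Definition boundary_in (D : {set X}) (G : pred {set X}) : R :=
  \sum_(i in D) \sum_(S : {set X} | S \subset D :\ i)
     (if G S && ~~ G (i |: S) then mu_on D S else 0).

Definition down_closed (G : pred {set X}) := forall S T : {set X}, T \subset S -> G S -> G T.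

Lemma mu_onD1 (D S : {set X}) x : x \in D -> S \subset D :\ x ->
  mu_on D S = (1 - p) * mu_on (D :\ x) S.
Proof.
move=> xD sS; rewrite /mu_on (cardsD1 x D) xD add1n.
by rewrite subSn ?subset_leq_card // exprS mulrCA.
Qed.

Lemma mu_onU1 (D S : {set X}) x : x \in D -> S \subset D :\ x ->
  mu_on D (x |: S) = p * mu_on (D :\ x) S.
Proof.
move=> xD sS; have xS : x \notin S by move: sS; rewrite subsetD1 => /andP [].
by rewrite /mu_on (cardsD1 x D) xD cardsU1 xS !add1n subSS exprS mulrA.
Qed.

Lemma eq_mu_in (D : {set X}) (G H : pred {set X}) :
  (forall S : {set X}, S \subset D -> G S = H S) -> mu_in D G = mu_in D H.
Proof. by move=> GH; apply: eq_bigr => S /GH ->. Qed.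

Hypotheses (p_ge0 : 0 <= p) (p_le1 : p <= 1).

Lemma mu_in_ge0 (D : {set X}) (G : pred {set X}) : 0 <= mu_in D G.
Proof.
apply: sumr_ge0 => S _; case: (G S) => //.
by rewrite mulr_ge0 ?exprn_ge0 ?subr_ge0.
Qed.

Lemma le_mu_in (D : {set X}) (G H : pred {set X}) :
  (forall S, G S -> H S) -> mu_in D G <= mu_in D H.
Proof.
move=> GH; apply: ler_sum => S _; case: (boolP (G S)) => [/GH -> //|_].
by case: (H S); rewrite // mulr_ge0 ?exprn_ge0 ?subr_ge0.
Qed.

Lemma mu_inD1 (D : {set X}) (G : pred {set X}) x : x \in D ->
  mu_in D G = (1 - p) * mu_in (D :\ x) G + p * mu_in (D :\ x) (fun S => G (x |: S)).
Proof.
move=> xD; rewrite /mu_in (big_subsetD1 _ xD) !big_distrr /=; congr (_ + _).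
  by apply: eq_bigr => S sS; rewrite (mu_onD1 xD sS); case: (G S); rewrite ?mulr0.
by apply: eq_bigr => S sS; rewrite (mu_onU1 xD sS); case: (G _); rewrite ?mulr0.
Qed.

Lemma mu_in_predT (D : {set X}) : mu_in D predT = 1.
Proof.
have [n] := ubnP #|D|; elim: n D => // n IH D.
have [->|[x xD]] := set_0Vmem D => [_|D_lt].
  rewrite /mu_in (eq_bigl (pred1 set0)) => [|S]; last by rewrite subset0.
  by rewrite big_pred1_eq /mu_on cards0 expr0 mul1r.
have D1_lt : (#|D :\ x| < n)%N by move: D_lt; rewrite (cardsD1 x D) xD.
by rewrite (mu_inD1 _ xD) !IH // !mulr1 subrK.
Qed.

Lemma boundary_inD1 (D : {set X}) (G : pred {set X}) x : x \in D -> down_closed G ->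
  boundary_in D G = (1 - p) * boundary_in (D :\ x) G
    + p * boundary_in (D :\ x) (fun S => G (x |: S))
    + (1 - p) * (mu_in (D :\ x) G - mu_in (D :\ x) (fun S => G (x |: S))).
Proof.
move=> xD downG; rewrite /boundary_in (bigD1 x xD) /= addrC; congr (_ + _).
  rewrite (eq_bigl (mem (D :\ x))) => [|i]; last by rewrite !inE andbC.
  rewrite !big_distrr -big_split /=; apply: eq_bigr => i; rewrite in_setD1 => /andP [ix iD].
  have xDi : x \in D :\ i by rewrite in_setD1 eq_sym ix.
  rewrite (big_subsetD1 _ xDi) (_ : (D :\ i) :\ x = (D :\ x) :\ i); last by rewrite !setDDl setUC.
  rewrite !big_distrr /=; congr (_ + _).
    apply: eq_bigr => S sS; have sSx : S \subset D :\ x by apply: subset_trans sS (subsetDl _ _).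
    by rewrite (mu_onD1 xD sSx); case: (_ && _); rewrite ?mulr0.
  apply: eq_bigr => S sS; have sSx : S \subset D :\ x by apply: subset_trans sS (subsetDl _ _).
  by rewrite (mu_onU1 xD sSx) setUCA; case: (_ && _); rewrite ?mulr0.
rewrite /mu_in -sumrB big_distrr /=; apply: eq_bigr => S sS.
rewrite (mu_onD1 xD sS).
have GxS_GS : G (x |: S) -> G S by apply: downG; apply: subsetUr.
by case: (boolP (G (x |: S))) => [/GxS_GS ->|_]; case: (G S) => /=; ring.
Qed.

End RestrictedMeasure.

Lemma xlogb_mu_in_le_boundary (R : realType) (X : finType) (p : R)
    (D : {set X}) (G : pred {set X}) :
  0 < p -> p < 1 -> down_closed G -> xlogb (1 - p) (mu_in p D G) <= boundary_in p D G.
Proof.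
move=> p_gt0 p_lt1; have p_ge0 := ltW p_gt0; have p_le1 := ltW p_lt1.
have [n] := ubnP #|D|; elim: n D G => // n IH D G.
have [->|[x xD]] := set_0Vmem D => [_ _|D_lt downG].
  rewrite /boundary_in big_set0 /mu_in (eq_bigl (pred1 set0)) => [|S]; last by rewrite subset0.
  rewrite big_pred1_eq /mu_on cards0 expr0 mul1r xlogbE.
  by case: (G set0); rewrite ?ln1 ?(mulr0, mul0r).
have D1_lt : (#|D :\ x| < n)%N by move: D_lt; rewrite (cardsD1 x D) xD.
pose Gx S := G (x |: S).
have downGx : down_closed Gx by move=> S T TS; apply: downG; apply: setUS.
have mu_Gx_le : mu_in p (D :\ x) Gx <= mu_in p (D :\ x) G.
  by apply: (le_mu_in p_ge0 p_le1) => S; apply: downG; apply: subsetUr.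
rewrite (boundary_inD1 p xD downG) (mu_inD1 p G xD).
apply: le_trans (xlogb_two_point p_gt0 p_lt1 (mu_in_ge0 p_ge0 p_le1 _ _) mu_Gx_le) _.
have := ler_wpM2l p_ge0 (IH _ _ D1_lt downGx).
have q_ge0 : 0 <= 1 - p by lra.
have := ler_wpM2l q_ge0 (IH _ _ D1_lt downG).
lra.
Qed.

Lemma mu_mu_in (R : realType) (X : finType) (p : R) (A : {set {set X}}) :
  mu p A = mu_in p setT (fun S => S \in A).
Proof.
rewrite /mu /mu_in big_mkcond /=; apply: eq_big => [S|S _]; first by rewrite subsetT.
by rewrite /mu_on /mu_set cardsT.
Qed.

Lemma mu_in_notin (R : realType) (X : finType) (p : R) (A : {set {set X}}) :
  mu_in p setT (fun S => S \notin A) = 1 - mu p A.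
Proof.
rewrite mu_mu_in -(@mu_in_predT _ _ p [set: X]) /mu_in -sumrB; apply: eq_bigr => S _.
by case: (S \in A); rewrite ?subr0 ?subrr.
Qed.

Section Influence.
Variables (X : finType) (i : X) (S : {set X}).
Hypothesis iNS : i \notin S.

Lemma symdiff_set1 : (S :\: [set i]) :|: ([set i] :\: S) = i |: S.
Proof.
apply/setP => y; rewrite !inE.
by case: (eqVneq y i) => [->|_] /=; rewrite ?andbT ?andbF ?orbF ?(negbTE iNS).
Qed.

Lemma symdiff_set1U : ((i |: S) :\: [set i]) :|: ([set i] :\: (i |: S)) = S.
Proof.
apply/setP => y; rewrite !inE.
by case: (eqVneq y i) => [->|_] /=; rewrite ?andbT ?andbF ?orbF ?(negbTE iNS).
Qed.

Lemma monotone_neq_setU1 (F : {set {set X}}) : monotone_increasing F ->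
  ((S \in F) != (i |: S \in F)) = (S \notin F) && (i |: S \in F).
Proof.
move=> monoF; case: (boolP (S \in F)) => [SF|_] /=; last by case: (_ \in F).
by rewrite (monoF _ _ SF (subsetUr _ _)).
Qed.

End Influence.

Lemma influence_eq_boundary (R : realType) (X : finType) (p : R) (F : {set {set X}}) :
  monotone_increasing F ->
  (1 - p) * total_influence p F = boundary_in p setT (fun S => S \notin F).
Proof.
move=> monoF; rewrite /total_influence /boundary_in big_distrr /=.
apply: eq_big => [i|i _]; first by rewrite in_setT.
have iT : i \in [set: X] := in_setT i.
have iNS (S : {set X}) : S \subset setT :\ i -> i \notin S.
  by rewrite subsetD1 => /andP [].
pose pivotal (S : {set X}) := (S \notin F) && (i |: S \in F).
rewrite mu_mu_in (mu_inD1 p _ iT).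
rewrite (@eq_mu_in _ _ _ _ _ pivotal); last first.
  by move=> S /iNS iS; rewrite inE symdiff_set1 // monotone_neq_setU1.
rewrite (@eq_mu_in _ _ _ _ _ pivotal); last first.
  by move=> S /iNS iS; rewrite inE symdiff_set1U // eq_sym monotone_neq_setU1.
rewrite -mulrDl subrK mul1r /mu_in big_distrr /=; apply: eq_bigr => S sS.
by rewrite negbK (mu_onD1 p iT sS) /pivotal; case: (_ && _); rewrite ?mulr0.
Qed.

Theorem mainTheorem2 (R : realType) (X : finType) (p : R)
  (F : {set {set X}}) :
  0 < p -> p < 1 -> monotone_increasing F ->
  (1 - p) * total_influence p F >= xlogb (1 - p) (1 - mu p F).
Proof.
move=> p_gt0 p_lt1 monoF.
have downNF : down_closed (fun S => S \notin F).
  by move=> S T TS; apply: contra => TF; apply: monoF TF TS.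
rewrite influence_eq_boundary // -mu_in_notin.
exact: xlogb_mu_in_le_boundary.
Qed.
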